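(* Let $\ell^{\infty}$ be the space of bounded real sequences $x=(x_i)_{i\in\mathbb{N}}$, and for $p\in(0,\infty)$, $n\in\mathbb{N}$ let $$\|x\|_{\infty,p,n}:=\sup_{j\in\mathbb{N}}\Big(\frac{1}{n}\sum_{i=j}^{j+(n-1)}|x_i|^{p}\Big)^{1/p}.$$ Let $d\in\mathbb{N}$, $\alpha_1,\dots,\alpha_d\in\mathbb{N}$ and $n=\sum_{l=1}^{d}\alpha_l$. Then for all $p\in[1,\infty)$ and all $x\in\ell^{\infty}$, $$\|x\|_{\infty,p,n}^{p}\leq \sum_{l=1}^{d}\frac{\alpha_l}{n}\|x\|_{\infty,p,\alpha_l}^{p}.$$
   Context: $\mathbb{N}=\{1,2,3,\dots\}$. *)

From Stdlib Require Import Reals.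
From Coquelicot Require Import Coquelicot.
Open Scope R_scope.

(* a^q for a >= 0 and real q > 0, with the convention 0^q = 0. *)
Definition rpow (a q : R) : R := if Req_EM_T a 0 then 0 else Rpower a q.

(* Sequences are x : nat -> R, with x i the i-th term for i in N = {1,2,...}
   (the value x 0 is irrelevant). *)
Definition bounded_seq (x : nat -> R) : Prop :=
  exists M : R, forall i : nat, (1 <= i)%nat -> Rabs (x i) <= M.

Definition window_avg (x : nat -> R) (p : R) (n j : nat) : R :=
  / INR n * sum_n_m (fun i => rpow (Rabs (x i)) p) j (j + (n - 1)).

(* ||x||_{inf,p,n} = sup_{j in N} (window_avg)^{1/p}; j ranges over j >= 1
   (Sup_seq ranges over k : nat, we take j = k+1). *)
Definition norm_ipn (x : nat -> R) (p : R) (n : nat) : R :=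
  real (Sup_seq (fun k => rpow (window_avg x p n (S k)) (/ p))).

Fixpoint nsum1 (a : nat -> nat) (d : nat) : nat :=
  match d with O => O | S d' => (nsum1 a d' + a d)%nat end.

(* Split a window of length n = alpha_1 + ... + alpha_d into consecutive
   blocks of lengths alpha_l.  The sum of |x_i|^p over the window is the sum
   of the block sums, and the block of length alpha_l is itself a window, so
   its sum is at most alpha_l ||x||_{inf,p,alpha_l}^p.  Dividing by n and
   taking the supremum over the window position gives the inequality. *)

From Stdlib Require Import Reals Lra Lia.
From Coquelicot Require Import Coquelicot.
Open Scope R_scope.

Lemma rpow_ge0 a q : 0 <= rpow a q.
Proof.
  unfold rpow; destruct (Req_EM_T a 0); [lra | left; apply exp_pos].
Qed.

Lemma rpow_le_compat a b q : 0 <= a <= b -> 0 < q -> rpow a q <= rpow b q.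
Proof.
  intros [Ha Hab] Hq; unfold rpow at 1.
  destruct (Req_EM_T a 0); [apply rpow_ge0|].
  unfold rpow; destruct (Req_EM_T b 0); [lra|].
  apply Rle_Rpower_l; lra.
Qed.

Lemma rpow_invK a q : 0 <= a -> 0 < q -> rpow (rpow a (/ q)) q = a.
Proof.
  intros Ha Hq; unfold rpow at 2.
  destruct (Req_EM_T a 0) as [->|Ha0].
  - unfold rpow; destruct (Req_EM_T 0 0); lra.
  - assert (Hpos : 0 < Rpower a (/ q)) by apply exp_pos.
    unfold rpow; destruct (Req_EM_T (Rpower a (/ q)) 0); [lra|].
    rewrite Rpower_mult, Rinv_l by lra; apply Rpower_1; lra.
Qed.

Lemma sum_n_m_le_loc (a b : nat -> R) n m :
  (forall k, (n <= k <= m)%nat -> a k <= b k) -> sum_n_m a n m <= sum_n_m b n m.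
Proof.
  intros Hab.
  rewrite (sum_n_m_ext_loc b (fun k => if andb (Nat.leb n k) (Nat.leb k m) then b k else a k)).
  - apply sum_n_m_le; intros k.
    destruct (Nat.leb_spec n k), (Nat.leb_spec k m); simpl; try lra.
    apply Hab; lia.
  - intros k Hk.
    rewrite (proj2 (Nat.leb_le n k)), (proj2 (Nat.leb_le k m)) by lia; reflexivity.
Qed.

Section SupSeq.

Variables (u : nat -> R) (B : R).
Hypothesis u_le_B : forall k, u k <= B.

Lemma Sup_seq_le_ub : Rbar_le (Sup_seq u) B.
Proof.
  apply Rbar_not_lt_le; intros Hlt.
  apply Sup_seq_minor_lt in Hlt as [k Hk]; simpl in Hk.
  specialize (u_le_B k); lra.
Qed.

Lemma Sup_seq_finite_ub : Sup_seq u = Finite (real (Sup_seq u)).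
Proof.
  assert (Hlow := Sup_seq_minor_le u (u O) O (Rle_refl _)).
  assert (Hup := Sup_seq_le_ub).
  destruct (Sup_seq u); simpl in *; easy.
Qed.

Lemma real_Sup_seq_ub k : u k <= real (Sup_seq u).
Proof.
  assert (Hk := Sup_seq_minor_le u (u k) k (Rle_refl _)).
  rewrite Sup_seq_finite_ub in Hk; exact Hk.
Qed.

Lemma real_Sup_seq_le : real (Sup_seq u) <= B.
Proof.
  assert (Hup := Sup_seq_le_ub).
  rewrite Sup_seq_finite_ub in Hup; exact Hup.
Qed.

End SupSeq.

Lemma window_avg_ge0 x p m j : 0 <= window_avg x p m j.
Proof.
  unfold window_avg; apply Rmult_le_pos.
  - destruct m; [simpl; rewrite Rinv_0; lra|].
    left; apply Rinv_0_lt_compat, lt_0_INR; lia.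
  - apply Rle_trans with (sum_n_m (fun _ : nat => 0) j (j + (m - 1))).
    + rewrite sum_n_m_const; lra.
    + apply sum_n_m_le; intros; apply rpow_ge0.
Qed.

Lemma INR_mul_window_avg x p m j : (1 <= m)%nat ->
  INR m * window_avg x p m j = sum_n_m (fun i => rpow (Rabs (x i)) p) j (j + (m - 1)).
Proof.
  intros Hm; unfold window_avg.
  rewrite <- Rmult_assoc, Rinv_r, Rmult_1_l; [reflexivity|].
  apply not_0_INR; lia.
Qed.

Lemma window_avg_bounded x p : bounded_seq x -> 0 < p ->
  exists C, forall m j, (1 <= m)%nat -> (1 <= j)%nat -> window_avg x p m j <= C.
Proof.
  intros [M HM] Hp; exists (rpow M p); intros m j Hm Hj.
  assert (HmR : 0 < INR m) by (apply lt_0_INR; lia).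
  apply Rmult_le_reg_l with (INR m); [exact HmR|].
  rewrite INR_mul_window_avg by exact Hm.
  apply Rle_trans with (sum_n_m (fun _ => rpow M p) j (j + (m - 1))).
  - apply sum_n_m_le_loc; intros k Hk.
    apply rpow_le_compat; [split; [apply Rabs_pos | apply HM; lia] | exact Hp].
  - rewrite sum_n_m_const.
    replace (S (j + (m - 1)) - j)%nat with m by lia; lra.
Qed.

Lemma window_avg_le_norm_ipn x p m j : bounded_seq x -> 0 < p ->
  (1 <= m)%nat -> (1 <= j)%nat -> window_avg x p m j <= rpow (norm_ipn x p m) p.
Proof.
  intros Hx Hp Hm Hj.
  destruct (window_avg_bounded x p Hx Hp) as [C HC].
  set (u := fun k => rpow (window_avg x p m (S k)) (/ p)).
  assert (HuC : forall k, u k <= rpow C (/ p)).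
  { intros k; apply rpow_le_compat.
    - split; [apply window_avg_ge0 | apply HC; lia].
    - apply Rinv_0_lt_compat; exact Hp. }
  destruct j as [|k]; [lia|].
  rewrite <- (rpow_invK (window_avg x p m (S k)) p (window_avg_ge0 _ _ _ _) Hp).
  apply rpow_le_compat; [split; [apply rpow_ge0 | apply (real_Sup_seq_ub u _ HuC)] | exact Hp].
Qed.

Lemma norm_ipn_pow_le x p m B : 0 < p ->
  (forall j, (1 <= j)%nat -> window_avg x p m j <= B) -> rpow (norm_ipn x p m) p <= B.
Proof.
  intros Hp HB.
  assert (HB0 : 0 <= B) by (eapply Rle_trans; [apply window_avg_ge0 | apply (HB 1%nat); lia]).
  set (u := fun k => rpow (window_avg x p m (S k)) (/ p)).
  assert (HuB : forall k, u k <= rpow B (/ p)).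
  { intros k; apply rpow_le_compat.
    - split; [apply window_avg_ge0 | apply HB; lia].
    - apply Rinv_0_lt_compat; exact Hp. }
  rewrite <- (rpow_invK B p HB0 Hp).
  apply rpow_le_compat; [split | exact Hp].
  - apply Rle_trans with (u O); [apply rpow_ge0 | apply (real_Sup_seq_ub u _ HuB)].
  - apply (real_Sup_seq_le u _ HuB).
Qed.

Lemma nsum1_ge a D : (forall l, (1 <= l <= D)%nat -> (1 <= a l)%nat) -> (D <= nsum1 a D)%nat.
Proof.
  induction D as [|D IH]; simpl; intros Ha; [lia|].
  assert (1 <= a (S D))%nat by (apply Ha; lia).
  assert (D <= nsum1 a D)%nat by (apply IH; intros; apply Ha; lia).
  lia.
Qed.

Lemma sum_n_m_blocks (g : nat -> R) a D j : (1 <= D)%nat ->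
  (forall l, (1 <= l <= D)%nat -> (1 <= a l)%nat) ->
  sum_n_m g j (j + (nsum1 a D - 1)) =
  sum_n_m (fun l => sum_n_m g (j + nsum1 a (l - 1)) (j + nsum1 a (l - 1) + (a l - 1))) 1 D.
Proof.
  induction D as [|D IH]; intros HD Ha; [lia|].
  destruct D as [|D].
  - rewrite sum_n_n; simpl; rewrite Nat.add_0_r; reflexivity.
  - rewrite sum_n_Sm, <- IH by (lia || (intros; apply Ha; lia)).
    assert (Hfirst := nsum1_ge a (S D) ltac:(intros; apply Ha; lia)).
    assert (Hlast : (1 <= a (S (S D)))%nat) by (apply Ha; lia).
    change (nsum1 a (S (S D))) with (nsum1 a (S D) + a (S (S D)))%nat.
    rewrite (sum_n_m_Chasles g j (j + (nsum1 a (S D) - 1))) by lia.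
    replace (S (j + (nsum1 a (S D) - 1))) with (j + nsum1 a (S D))%nat by lia.
    replace (S (S D) - 1)%nat with (S D) by lia.
    replace (j + (nsum1 a (S D) + a (S (S D)) - 1))%nat
      with (j + nsum1 a (S D) + (a (S (S D)) - 1))%nat by lia.
    reflexivity.
Qed.

Lemma window_avg_blocks x p a D j : (1 <= D)%nat ->
  (forall l, (1 <= l <= D)%nat -> (1 <= a l)%nat) ->
  INR (nsum1 a D) * window_avg x p (nsum1 a D) j =
  sum_n_m (fun l => INR (a l) * window_avg x p (a l) (j + nsum1 a (l - 1))) 1 D.
Proof.
  intros HD Ha.
  assert (Hn : (1 <= nsum1 a D)%nat) by (pose proof (nsum1_ge a D Ha); lia).
  rewrite INR_mul_window_avg, sum_n_m_blocks by assumption.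
  apply sum_n_m_ext_loc; intros l Hl.
  rewrite INR_mul_window_avg by (apply Ha; lia); reflexivity.
Qed.

Theorem lemma1p2 (d : nat) (alpha : nat -> nat)
  (Hd : (1 <= d)%nat)
  (Halpha : forall l : nat, (1 <= l <= d)%nat -> (1 <= alpha l)%nat)
  (p : R) (Hp : 1 <= p) (x : nat -> R) (Hx : bounded_seq x) :
  let n := nsum1 alpha d in
  rpow (norm_ipn x p n) p
    <= sum_n_m (fun l => INR (alpha l) / INR n * rpow (norm_ipn x p (alpha l)) p) 1 d.
Proof.
  intros n.
  assert (HnR : 0 < INR n) by (apply lt_0_INR; pose proof (nsum1_ge alpha d Halpha); unfold n; lia).
  apply norm_ipn_pow_le; [lra|]; intros j Hj.
  apply Rmult_le_reg_l with (INR n); [exact HnR|].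
  change (INR n * window_avg x p n j) with
    (INR (nsum1 alpha d) * window_avg x p (nsum1 alpha d) j).
  rewrite window_avg_blocks by assumption.
  assert (Hscale : forall u : nat -> R,
    INR n * sum_n_m (fun l => INR (alpha l) / INR n * u l) 1 d
    = sum_n_m (fun l => INR (alpha l) * u l) 1 d).
  { intros u; etransitivity; [symmetry; apply (sum_n_m_mult_l (K := R_AbsRing))|].
    apply sum_n_m_ext; intros l; cbn -[Rdiv INR]; field; lra. }
  rewrite Hscale; apply sum_n_m_le_loc; intros l Hl.
  apply Rmult_le_compat_l; [apply pos_INR|].
  apply window_avg_le_norm_ipn; [exact Hx | lra | apply Halpha; lia | lia].
Qed.
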